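(* There is a constant $c$ such that for every $n\in\mathbb{N}_{\geq 1}$ there exists a language $L_n\subseteq\{a,b\}^*$ with $L_n\in\mathsf{DD}_0$ such that $L_n$ is recognized by an NFA with at most $c\,n^2$ states, but every poNFA recognizing $L_n$ has more than $2^{n-1}$ states.
   Context: $\mathsf{DD}_0$ (level $0$ of the dot-depth hierarchy) is the class of finite and cofinite languages. NFAs have a single initial state and no $\varepsilon$-transitions. For an NFA with transition function $\delta$, write $p\leq q$ if $q\in\delta(p,w)$ for some word $w$; the NFA is a poNFA (partially ordered NFA) if $\leq$ is a partial order on its states. The size of an automaton is its number of states. *)

(* Alphabet {a,b} is modelled by bool (a = false, b = true). *)
From mathcomp Require Import all_boot.
Set Implicit Arguments. Unset Strict Implicit. Unset Printing Implicit Defensive.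

Record nfa (A : finType) := NFA {
  state : finType;
  init : state;
  delta : state -> A -> {set state};
  final : {set state}
}.

Fixpoint delta_set (A : finType) (M : nfa A) (X : {set state M}) (w : seq A)
  : {set state M} :=
  match w with
  | [::] => X
  | a :: w' => @delta_set A M (\bigcup_(p in X) delta p a) w'
  end.
Arguments delta_set {A} M X w.

Definition delta_star (A : finType) (M : nfa A) (p : state M) (w : seq A) :=
  delta_set M [set p] w.

Definition accepts (A : finType) (M : nfa A) (w : seq A) : bool :=
  [exists q in delta_star (init M) w, q \in final M].

Definition recognizes (A : finType) (M : nfa A) (L : seq A -> Prop) : Prop :=
  forall w, L w <-> accepts M w.

Definition nfa_size (A : finType) (M : nfa A) : nat := #|state M|.

Definition reach_le (A : finType) (M : nfa A) (p q : state M) : Prop :=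
  exists w : seq A, q \in delta_star p w.

(* poNFA: reach_le is a partial order (reflexivity and transitivity always
   hold, so we require all three explicitly anyway). *)
Definition is_poNFA (A : finType) (M : nfa A) : Prop :=
  (forall p : state M, reach_le p p) /\
  (forall p q r : state M, reach_le p q -> reach_le q r -> reach_le p r) /\
  (forall p q : state M, reach_le p q -> reach_le q p -> p = q).

Definition lang_finite (A : finType) (L : seq A -> Prop) : Prop :=
  exists s : seq (seq A), forall w, L w <-> w \in s.

Definition in_DD0 (A : finType) (L : seq A -> Prop) : Prop :=
  lang_finite L \/ lang_finite (fun w => ~ L w).

From mathcomp Require Import all_boot zify.
From Stdlib Require Import ClassicalEpsilon.
Set Implicit Arguments. Unset Strict Implicit. Unset Printing Implicit Defensive.

(* Let m = n - 1 and read bit strings as consecutive little-endian (m+1)-bit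
   numbers.  An NFA with O(m) states can guess an error in counting: a block
   of ones, or a bit of a block that differs from the corresponding bit of the
   successor of the previous block.  It accepts every string with more than
   2^(m+1) blocks, but rejects the correct count 0, 1, ..., 2^m - 1.
   Over {a, b} = {false, true}, encode the bit 0 as ab and 1 as aaab; L_n is
   the set of words that contain five a's or three b's in a row, have even
   length, or decode to a string with a counting error.  Its complement is
   finite, and it is recognized by the counting NFA combined with the
   bounded-counter decoder, an NFA with O(n) states.
   In a poNFA every transition that is not a self-loop leads to a state with
   strictly fewer reachable states, so a poNFA accepting a word at least as
   long as its number of states also accepts the word with some letter
   doubled.  Doubling a letter of the encoding of the correct count changes
   the parity of the length but not the decoded string, which leaves L_n; so
   every poNFA for L_n has more than 2^m (m+1) states. *)

Definition words_upto (A : finType) (k : nat) : seq (seq A) :=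
  flatten [seq [seq val t | t : i.-tuple A] | i <- iota 0 k.+1].

Lemma mem_words_upto (A : finType) k (w : seq A) : size w <= k -> w \in words_upto A k.
Proof.
move=> size_w; apply/flattenP; exists [seq val t | t : (size w).-tuple A].
  by apply/mapP; exists (size w); rewrite ?mem_iota ?ltnS.
by apply/imageP; exists (in_tuple w).
Qed.

Lemma lang_finite_bounded (A : finType) (L : seq A -> Prop) (P : pred (seq A)) k :
  (forall w, L w <-> P w) -> (forall w, P w -> size w <= k) -> lang_finite L.
Proof.
move=> LP P_short; exists [seq w <- words_upto A k | P w] => w.
rewrite mem_filter LP; split => [Pw | /andP [] //].
by rewrite Pw mem_words_upto ?P_short.
Qed.

Section Runs.
Variables (A : finType) (M : nfa A).

Lemma delta_setE (X : {set state M}) w :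
  delta_set M X w = \bigcup_(p in X) delta_star p w.
Proof.
elim: w X => [|a w IH] X /=.
  apply/setP => q; apply/idP/bigcupP => [qX | [p pX]]; first by exists q; rewrite ?set11.
  by rewrite /delta_star /= inE => /eqP ->.
rewrite IH; apply/setP => q; apply/bigcupP/bigcupP => [[r /bigcupP [p pX rp] qr] | [p pX]].
  by exists p => //; rewrite /delta_star /= big_set1 IH; apply/bigcupP; exists r.
rewrite /delta_star /= big_set1 IH => /bigcupP [r rp qr].
by exists r => //; apply/bigcupP; exists p.
Qed.

Lemma delta_star1 (p : state M) a : delta_star p [:: a] = delta p a.
Proof. by rewrite /delta_star /= big_set1. Qed.

Lemma delta_star_cat (p : state M) u v :
  delta_star p (u ++ v) = \bigcup_(r in delta_star p u) delta_star r v.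
Proof.
rewrite -delta_setE /delta_star.
by elim: u [set p] => //= a u IH X; rewrite IH.
Qed.

Lemma delta_star_rcons (p : state M) w a :
  delta_star p (rcons w a) = \bigcup_(r in delta_star p w) delta r a.
Proof. by rewrite -cats1 delta_star_cat; apply: eq_bigr => r _; rewrite delta_star1. Qed.

Lemma delta_star_catP (p q : state M) u v :
  reflect (exists2 r, r \in delta_star p u & q \in delta_star r v)
          (q \in delta_star p (u ++ v)).
Proof. by rewrite delta_star_cat; apply: (iffP bigcupP) => -[r]; exists r. Qed.

Lemma delta_star_trans (p r q : state M) u v :
  r \in delta_star p u -> q \in delta_star r v -> q \in delta_star p (u ++ v).
Proof. by move=> pr rq; apply/delta_star_catP; exists r. Qed.

End Runs.

Section PartialOrder.
Variables (A : finType) (M : nfa A).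
Hypothesis poM : is_poNFA M.

Definition reach_set (p : state M) : {set state M} :=
  [set q | if excluded_middle_informative (reach_le p q) then true else false].

Lemma reach_setP (p q : state M) : reflect (reach_le p q) (q \in reach_set p).
Proof. by rewrite inE; case: excluded_middle_informative => h; constructor. Qed.

Lemma reach_set_proper (p q : state M) a :
  q \in delta p a -> q != p -> reach_set q \proper reach_set p.
Proof.
have [reach_refl [reach_trans reach_anti]] := poM.
move=> pq neq_qp; have le_pq : reach_le p q by exists [:: a]; rewrite delta_star1.
apply/properP; split.
  by apply/subsetP => r /reach_setP le_qr; apply/reach_setP; apply: reach_trans le_qr.
exists p; first exact/reach_setP.
by apply/reach_setP => le_qp; move/eqP: neq_qp; apply; apply: reach_anti.
Qed.

(* Each transition that is not a self-loop strictly shrinks the reachable set. *)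
Lemma run_self_loop_or_descent w (p q : state M) :
  q \in delta_star p w ->
  (exists u a v (r : state M), [/\ w = u ++ a :: v, r \in delta_star p u,
       r \in delta r a & q \in delta_star r v])
  \/ #|reach_set q| + size w <= #|reach_set p|.
Proof.
elim: w p => [|a w IH] p.
  by rewrite inE => /eqP ->; right; rewrite addn0.
rewrite -cat1s => /delta_star_catP [p' ]; rewrite delta_star1 => pp' p'q.
have [eq_p'p | neq_p'p] := eqVneq p' p.
  by move: pp' p'q; rewrite eq_p'p => pp pq; left; exists [::], a, w, p; rewrite /delta_star set11.
case: (IH _ p'q) => [[u [b [v [r [-> p'r rr rq]]]]] | le_q_p'].
  left; exists (a :: u), b, v, r; split => //.
  by rewrite -cat1s; apply: delta_star_trans p'r; rewrite delta_star1.
right; have := proper_card (reach_set_proper pp' neq_p'p).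
by rewrite /= addnS; apply: leq_ltn_trans.
Qed.

Lemma accepts_double_letter x :
  accepts M x -> #|state M| <= size x ->
  exists u a v, x = u ++ a :: v /\ accepts M (u ++ [:: a, a & v]).
Proof.
move=> /existsP [q /andP [init_q final_q]] size_x.
case: (run_self_loop_or_descent init_q) => [[u [a [v [r [-> ur rr rq]]]]] | short].
  exists u, a, v; split => //; apply/existsP; exists q; rewrite final_q andbT.
  have r_a : r \in delta_star r [:: a] by rewrite delta_star1.
  apply: delta_star_trans ur _; rewrite -cat1s -[a :: v]cat1s.
  exact: delta_star_trans r_a (delta_star_trans r_a rq).
have q_q : q \in reach_set q by apply/reach_setP; apply: poM.1.
have reach_q_pos : 0 < #|reach_set q| by apply/card_gt0P; exists q.
have := leq_trans short (max_card _); lia.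
Qed.

End PartialOrder.

Section Transducer.
Variables (A C T : Type) (step : T -> A -> T) (out : T -> A -> seq C).

Fixpoint transduce (x : T) (w : seq A) : seq C :=
  if w is a :: w' then out x a ++ transduce (step x a) w' else [::].

Lemma transduce_cat x u v :
  transduce x (u ++ v) = transduce x u ++ transduce (foldl step x u) v.
Proof. by elim: u x => //= a u IH x; rewrite IH catA. Qed.

Lemma transduce_rcons x w a :
  transduce x (rcons w a) = transduce x w ++ out (foldl step x w) a.
Proof. by rewrite -cats1 transduce_cat /= cats0. Qed.

End Transducer.

Section Cascade.
Variables (A C S : finType) (step : S -> A -> S) (out : S -> A -> seq C).
Variables (s0 : S) (acc : pred S) (B : nfa C).

(* [B] reads the output of the deterministic transducer ([step], [out]). *)
Definition cascade : nfa A :=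
  @NFA A (S * state B)%type (s0, init B)
    (fun x a => setX [set step x.1 a] (delta_star x.2 (out x.1 a)))
    [set x | acc x.1 || (x.2 \in final B)].

Lemma delta_star_cascade (x : state cascade) w :
  delta_star x w =
    setX [set foldl step x.1 w] (delta_star x.2 (transduce step out x.1 w)).
Proof.
elim: w x => [|a w IH] [s q] /=.
  by apply/setP => -[s' q']; rewrite !inE xpair_eqE.
rewrite -cat1s delta_star_cat delta_star1 delta_star_cat.
apply/setP => -[s' q']; rewrite in_setX; apply/bigcupP/andP => [[[t r]]|[]].
  rewrite in_setX IH in_setX => /andP [/set1P -> qr] /andP [-> rq'].
  by split => //; apply/bigcupP; exists r.
move=> s'E /bigcupP [r qr rq']; exists (step s a, r); first by rewrite in_setX set11.
by rewrite IH in_setX s'E rq'.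
Qed.

Lemma cascade_accepts w :
  delta_star (init B) (transduce step out s0 w) != set0 ->
  accepts cascade w = acc (foldl step s0 w) || accepts B (transduce step out s0 w).
Proof.
rewrite /accepts /= delta_star_cascade /= => /set0Pn [q0 wq0].
apply/existsP/orP => [[[s q]] | [acc_s | /existsP [q /andP [wq fq]]]].
- rewrite !inE /= => /andP [/andP [/eqP -> wq] /orP [-> | fq]]; first by left.
  by right; apply/existsP; exists q; rewrite wq.
- by exists (foldl step s0 w, q0); rewrite in_setX set11 inE /= acc_s wq0.
- by exists (foldl step s0 w, q); rewrite in_setX set11 inE /= wq fq orbT.
Qed.

End Cascade.

(* [Some (p, i, j)]: [p] is the parity of the length read so far, [i] the
   number of a's since the last b, and [j] the number of b's since the last
   a; [None] once five a's or three b's occurred in a row. *)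
Definition dstate := option (bool * nat * nat).

Definition decode_step (x : dstate) (c : bool) : dstate :=
  if x is Some (p, i, j) then
    if c then
      if 0 < i then Some (~~ p, 0, 1) else if j < 2 then Some (~~ p, 0, j.+1) else None
    else if i < 4 then Some (~~ p, i.+1, 0) else None
  else None.

Definition decode_out (x : dstate) (c : bool) : seq bool :=
  if x is Some (_, i, _) then if c && (0 < i) then [:: 3 <= i] else [::] else [::].

Definition decode_start : dstate := Some (false, 0, 0).
Definition decode_state (w : seq bool) : dstate := foldl decode_step decode_start w.
Definition decode (w : seq bool) : seq bool := transduce decode_step decode_out decode_start w.

Definition decode_accept (x : dstate) : bool := if x is Some (p, _, _) then ~~ p else true.

(* [decode_step] only produces counters [i <= 4] and [j <= 2]. *)
Definition fin_dstate := option (bool * 'I_5 * 'I_3).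

Definition dstate_of_fin (y : fin_dstate) : dstate :=
  if y is Some (p, i, j) then Some (p, val i, val j) else None.

Definition fin_of_dstate (x : dstate) : fin_dstate :=
  if x is Some (p, i, j) then Some (p, inord i, inord j) else None.

Definition fin_decode_step (y : fin_dstate) (c : bool) : fin_dstate :=
  fin_of_dstate (decode_step (dstate_of_fin y) c).

Definition fin_decode_out (y : fin_dstate) (c : bool) : seq bool :=
  decode_out (dstate_of_fin y) c.

Lemma dstate_of_fin_step y c :
  dstate_of_fin (fin_decode_step y c) = decode_step (dstate_of_fin y) c.
Proof.
rewrite /fin_decode_step; case: (dstate_of_fin y) => [[[p i] j]|] //=.
by case: c; repeat case: ifP => //= *; rewrite !inordK //; lia.
Qed.

Lemma foldl_fin_decode_step y w :
  dstate_of_fin (foldl fin_decode_step y w) = foldl decode_step (dstate_of_fin y) w.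
Proof. by elim: w y => //= c w IH y; rewrite IH dstate_of_fin_step. Qed.

Lemma transduce_fin_decode y w :
  transduce fin_decode_step fin_decode_out y w =
  transduce decode_step decode_out (dstate_of_fin y) w.
Proof. by elim: w y => //= c w IH y; rewrite IH dstate_of_fin_step. Qed.

Definition decoder_nfa (B : nfa bool) : nfa bool :=
  cascade fin_decode_step fin_decode_out (Some (false, ord0, ord0))
    (fun y => decode_accept (dstate_of_fin y)) B.

Lemma decoder_nfa_card (B : nfa bool) : #|state (decoder_nfa B)| = 31 * #|state B|.
Proof. by rewrite /= card_prod card_option !card_prod card_bool !card_ord. Qed.

Lemma decoder_nfa_accepts (B : nfa bool) w :
  (forall s, delta_star (init B) s != set0) ->
  accepts (decoder_nfa B) w = decode_accept (decode_state w) || accepts B (decode w).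
Proof.
by move=> B_live; rewrite cascade_accepts transduce_fin_decode ?foldl_fin_decode_step.
Qed.

Lemma decode_state_rcons w c : decode_state (rcons w c) = decode_step (decode_state w) c.
Proof. by rewrite /decode_state -cats1 foldl_cat. Qed.

Lemma decode_rcons w c : decode (rcons w c) = decode w ++ decode_out (decode_state w) c.
Proof. by rewrite /decode transduce_rcons. Qed.

(* Every decoded bit costs at most six letters, and at most six letters are pending. *)
Lemma decode_state_invariant w p i j : decode_state w = Some (p, i, j) ->
  [/\ i <= 4, j <= 2 & size w <= 6 * size (decode w) + (if 0 < i then 2 + i else j)].
Proof.
elim/last_ind: w p i j => [|w c IH] p i j; first by case=> _ <- <-.
rewrite decode_state_rcons decode_rcons size_cat size_rcons.
case E: (decode_state w) => [[[p' i'] j']|] //=; have [i'4 j'2 size_w] := IH _ _ _ E.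
clear E IH; case: i' i'4 size_w => [|i'] i'4 /= size_w; case: c => /=.
- by case: ifP => // j'_lt [_ <- <-] /=; split; lia.
- by case=> _ <- <- /=; split; lia.
- by case=> _ <- <- /=; split; lia.
- by case: ifP => // i'_lt [_ <- <-] /=; split; lia.
Qed.

Lemma decode_size w x : decode_state w = Some x -> size w <= 6 * size (decode w) + 6.
Proof.
case: x => [[p i] j] /decode_state_invariant [i4 j2 size_w].
by apply: leq_trans size_w _; rewrite leq_add2l; case: ifP => _; lia.
Qed.

Definition code (d : bool) : seq bool :=
  if d then [:: false; false; false; true] else [:: false; true].

Definition encode (s : seq bool) : seq bool := flatten (map code s).

Lemma encode_cons d s : encode (d :: s) = code d ++ encode s.
Proof. by []. Qed.

Definition double_nth (w : seq bool) i := take i w ++ nth false w i :: drop i w.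

Lemma double_nth_cat (u v : seq bool) i :
  double_nth (u ++ v) i =
  if i < size u then double_nth u i ++ v else u ++ double_nth v (i - size u).
Proof.
rewrite /double_nth take_cat nth_cat drop_cat; case: ifP => _; first by rewrite -catA.
by rewrite catA.
Qed.

Definition decodes p (w s : seq bool) p' := forall j, exists j',
  foldl decode_step (Some (p, 0, j)) w = Some (p', 0, j')
  /\ transduce decode_step decode_out (Some (p, 0, j)) w = s.

Lemma decodes_cat p u s p' v t p'' :
  decodes p u s p' -> decodes p' v t p'' -> decodes p (u ++ v) (s ++ t) p''.
Proof.
move=> dec_u dec_v j; have [j' [u_state u_out]] := dec_u j.
have [j'' [v_state v_out]] := dec_v j'.
by exists j''; rewrite foldl_cat transduce_cat u_state u_out v_state v_out.
Qed.

Lemma decodes_code p d : decodes p (code d) [:: d] p.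
Proof. by case: d; case: p => j; exists 1. Qed.

Lemma decodes_encode p s : decodes p (encode s) s p.
Proof.
elim: s => [|d s IH]; first by move=> j; exists j.
exact: decodes_cat (decodes_code p d) IH.
Qed.

Lemma decodes_double_code p d i :
  i < size (code d) -> decodes p (double_nth (code d) i) [:: d] (~~ p).
Proof. by case: d; case: p; case: i => [|[|[|[|i]]]] //= _ j; eexists. Qed.

Lemma decodes_double_encode p s i :
  i < size (encode s) -> decodes p (double_nth (encode s) i) s (~~ p).
Proof.
elim: s p i => [|d s IH] p i //.
rewrite encode_cons double_nth_cat size_cat; case: ifP => [i_d _ | /negbT i_d i_lt].
  exact: decodes_cat (decodes_double_code p i_d) (decodes_encode _ s).
apply: (decodes_cat (decodes_code p d)); apply: IH; rewrite ltn_subLR; lia.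
Qed.

Lemma size_encode s : size s <= size (encode s).
Proof. by elim: s => //= d s IH; rewrite size_cat -add1n leq_add //; case: d. Qed.

Section DecoderLanguage.
Variable B : nfa bool.
Hypothesis B_live : forall s, delta_star (init B) s != set0.

Lemma decoder_rejected_short N w :
  (forall s, N <= size s -> accepts B s) ->
  ~~ accepts (decoder_nfa B) w -> size w <= 6 * N + 6.
Proof.
move=> B_long; rewrite decoder_nfa_accepts // negb_or => /andP [].
case E: (decode_state w) => [x|] //= _ B_rej.
apply: leq_trans (decode_size E) _; rewrite leq_add2r leq_mul2l /= ltnW //.
by rewrite ltnNge; apply: contra B_rej; apply: B_long.
Qed.

Lemma decoder_accepts_encode s : accepts (decoder_nfa B) (encode s).
Proof.
have [j [state_eq _]] := decodes_encode false s 0.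
by rewrite decoder_nfa_accepts // /decode_state /decode_start state_eq.
Qed.

Lemma decoder_rejects_doubled s u a v :
  ~~ accepts B s -> encode s = u ++ a :: v ->
  ~~ accepts (decoder_nfa B) (u ++ [:: a, a & v]).
Proof.
move=> B_rej enc_s.
have -> : u ++ [:: a, a & v] = double_nth (encode s) (size u).
  by rewrite /double_nth enc_s take_size_cat // nth_cat ltnn subnn drop_size_cat.
have [|j [state_eq decode_eq]] := @decodes_double_encode false s (size u) _ 0.
  by rewrite enc_s size_cat /= addnS ltnS leq_addr.
by rewrite decoder_nfa_accepts // /decode_state /decode /decode_start state_eq decode_eq.
Qed.

(* A poNFA with at most [size (encode s)] states would accept a doubling of
   [encode s]. *)
Lemma poNFA_decoder_card_gt s (M : nfa bool) :
  ~~ accepts B s -> is_poNFA M -> recognizes M (accepts (decoder_nfa B)) ->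
  size s < #|state M|.
Proof.
move=> B_rej poM recM; rewrite ltnNge; apply/negP => small_M.
have M_enc : accepts M (encode s) by apply/recM; apply: decoder_accepts_encode.
have [u [a [v [enc_s M_doubled]]]] :=
  accepts_double_letter poM M_enc (leq_trans small_M (size_encode s)).
by move/negP: (decoder_rejects_doubled B_rej enc_s); apply; apply/recM.
Qed.

End DecoderLanguage.

Lemma inord0 n : inord 0 = ord0 :> 'I_n.+1.
Proof. exact: (inord_val ord0). Qed.

Lemma inord_max n : inord n = ord_max :> 'I_n.+1.
Proof. exact: (inord_val ord_max). Qed.

Fixpoint succ_bits (u : seq bool) : seq bool :=
  if u is b :: u' then (if b then false :: succ_bits u' else true :: u') else [::].

Fixpoint nat_of_bits (u : seq bool) : nat :=
  if u is b :: u' then b + 2 * nat_of_bits u' else 0.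

Lemma size_succ_bits u : size (succ_bits u) = size u.
Proof. by elim: u => //= b u IH; case: b => //=; rewrite IH. Qed.

Lemma nth_succ_bits u i : i < size u ->
  nth false (succ_bits u) i = nth false u i (+) all id (take i u).
Proof.
elim: u i => //= b u IH [|i] /=; first by case: b.
by rewrite ltnS => lt_i; case: b => /=; rewrite ?IH // addbF.
Qed.

Lemma nat_of_succ_bits u : ~~ all id u -> nat_of_bits (succ_bits u) = (nat_of_bits u).+1.
Proof. by elim: u => //= b u IH; case: b => /= u_ones; rewrite ?IH //; lia. Qed.

Lemma nat_of_bits_zeros n : nat_of_bits (nseq n false) = 0.
Proof. by elim: n => //= n ->. Qed.

Lemma nat_of_bits_lt u : nat_of_bits u < 2 ^ size u.
Proof. by elim: u => //= b u IH; rewrite expnS; case: b => /=; lia. Qed.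

Lemma nat_of_bits_ones u : all id u -> (nat_of_bits u).+1 = 2 ^ size u.
Proof. by elim: u => //= b u IH /andP [-> /IH u_val]; rewrite expnS -u_val /=; lia. Qed.

Section CounterNFA.
Variable m : nat.

Local Notation cstate := (option ('I_m.+1 + 'I_m.+1 * bool + 'I_m.+1 * bool)).

(* [Scan i]: at offset [i] of a block.  [Check i f]: at offset [i] of a
   block guessed to contain an error, [f] telling whether its bits read so far
   are all 1.  [Count i e]: [i] letters before the bit of the next block that
   must equal [e].  [Err]: an error has been found. *)
Definition Scan i : cstate := Some (inl (inl i)).
Definition Check i f : cstate := Some (inl (inr (i, f))).
Definition Count i e : cstate := Some (inr (i, e)).
Definition Err : cstate := None.

Definition check_step (i : 'I_m.+1) (f d : bool) : {set cstate} :=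
  Count ord_max (d (+) f)
  |: if i < m then [set Check (inord i.+1) (f && d)] else if f && d then [set Err] else set0.

Definition counter_step (q : cstate) (d : bool) : {set cstate} :=
  match q with
  | Some (inl (inl i)) => Scan (ordS i) |: (if i == ord0 then check_step i true d else set0)
  | Some (inl (inr (i, f))) => check_step i f d
  | Some (inr (i, e)) =>
      if i == ord0 then (if d != e then [set Err] else set0) else [set Count (inord i.-1) e]
  | None => [set Err]
  end.

Definition counter_nfa : nfa bool := @NFA bool cstate (Scan ord0) counter_step [set Err].

Local Notation cdelta := (@delta_star _ counter_nfa).

Lemma counter_nfa_card : #|state counter_nfa| = 5 * m.+1 + 1.
Proof.
rewrite /= card_option !card_sum !card_prod card_ord card_bool; lia.
Qed.

Lemma counter_accepts (s : seq bool) : Err \in cdelta (Scan ord0) s -> accepts counter_nfa s.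
Proof. by move=> s_err; apply/existsP; exists Err; rewrite s_err set11. Qed.

Lemma scan_run (w : seq bool) : Scan (inord (size w %% m.+1)) \in cdelta (Scan ord0) w.
Proof.
elim/last_ind: w => [|w d IH]; first by rewrite mod0n inord0 set11.
rewrite delta_star_rcons; apply/bigcupP; exists (Scan (inord (size w %% m.+1))) => //=.
apply/setU1P; left; congr Scan; apply: val_inj.
by rewrite /= !inordK ?ltn_mod // size_rcons -[(_ %% _).+1]addn1 modnDml addn1.
Qed.

Lemma counter_nfa_live (w : seq bool) : delta_star (init counter_nfa) w != set0.
Proof. by apply/set0Pn; exists (Scan (inord (size w %% m.+1))); apply: scan_run. Qed.

Lemma scan_block (u : seq bool) : m.+1 %| size u -> Scan ord0 \in cdelta (Scan ord0) u.
Proof. by move=> /eqP dvd_u; have := scan_run u; rewrite dvd_u inord0. Qed.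

Lemma check_run (w : seq bool) : size w <= m ->
  Check (inord (size w)) (all id w) \in cdelta (Check ord0 true) w.
Proof.
elim/last_ind: w => [|w d IH] size_w; first by rewrite inord0 set11.
rewrite size_rcons in size_w; rewrite delta_star_rcons; apply/bigcupP.
exists (Check (inord (size w)) (all id w)); first by apply: IH; lia.
rewrite /= /check_step inordK ?size_w /=; last by lia.
by rewrite size_rcons all_rcons andbC; apply/setU1P; right; apply: set11.
Qed.

Lemma scan_guesses_block (w : seq bool) q : 0 < size w ->
  q \in cdelta (Check ord0 true) w -> q \in cdelta (Scan ord0) w.
Proof.
case: w => // d w _; rewrite -cat1s !delta_star_cat !delta_star1 => /bigcupP [r r_d q_w].
by apply/bigcupP; exists r => //=; apply/setU1P; right.
Qed.

Lemma count_run (e : bool) (w : seq bool) : size w <= m ->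
  Count (inord (m - size w)) e \in cdelta (Count ord_max e) w.
Proof.
elim/last_ind: w => [|w d IH] size_w; first by rewrite subn0 inord_max set11.
rewrite size_rcons in size_w; rewrite delta_star_rcons; apply/bigcupP.
exists (Count (inord (m - size w)) e); first by apply: IH; lia.
rewrite /= ifF; last by apply/negbTE/eqP => /(congr1 val) /=; rewrite inordK; lia.
by rewrite inordK ?size_rcons ?subnS ?set11 //; lia.
Qed.

Lemma err_run (w : seq bool) : Err \in cdelta Err w.
Proof.
elim/last_ind: w => [|w d IH]; first exact: set11.
by rewrite delta_star_rcons; apply/bigcupP; exists Err; rewrite //= set11.
Qed.

Lemma counter_accepts_ones_block (u x v : seq bool) :
  m.+1 %| size u -> size x = m.+1 -> all id x -> accepts counter_nfa (u ++ x ++ v).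
Proof.
move=> dvd_u size_x ones_x; apply/counter_accepts.
apply: delta_star_trans (scan_block dvd_u) _; apply: delta_star_trans _ (err_run v).
apply: scan_guesses_block; first by rewrite size_x.
case/lastP: x size_x ones_x => // x b; rewrite size_rcons all_rcons => -[size_x] /andP [-> ones_x].
rewrite delta_star_rcons; apply/bigcupP; exists (Check (inord (size x)) (all id x)).
  by apply: check_run; rewrite size_x.
by rewrite /= /check_step size_x inordK // ltnn ones_x; apply/setU1P; right; rewrite set11.
Qed.

Lemma counter_accepts_carry_error (u x : seq bool) (d : bool) (y : seq bool) (d' : bool)
    (v : seq bool) :
  m.+1 %| size u -> size x <= m -> size y = m -> d' != d (+) all id x ->
  accepts counter_nfa (u ++ x ++ d :: y ++ d' :: v).
Proof.
move=> dvd_u size_x size_y d'_err; apply/counter_accepts.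
apply: delta_star_trans (scan_block dvd_u) _.
have -> : x ++ d :: y ++ d' :: v = (x ++ [:: d]) ++ (y ++ [:: d']) ++ v by rewrite -!catA.
apply: delta_star_trans _ (delta_star_trans _ (err_run v)).
- apply: (@scan_guesses_block _ (Count ord_max (d (+) all id x))); first by rewrite size_cat addn1.
  apply: delta_star_trans (check_run size_x) _.
  by rewrite delta_star1 /= /check_step; apply/setU1P; left.
- apply: delta_star_trans (count_run _ (eq_leq size_y)) _.
  by rewrite size_y subnn inord0 delta_star1 /= d'_err set11.
Qed.

Definition block (s : seq bool) j := take m.+1 (drop (j * m.+1) s).

Lemma size_block s j : j.+1 * m.+1 <= size s -> size (block s j) = m.+1.
Proof. by rewrite mulSn => size_s; rewrite size_takel // size_drop; lia. Qed.

Lemma rejected_block_succ s j : ~~ accepts counter_nfa s -> j.+2 * m.+1 <= size s ->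
  ~~ all id (block s j) /\ block s j.+1 = succ_bits (block s j).
Proof.
set a := j * m.+1 => rej_s size_s.
have size_j : j.+1 * m.+1 <= size s by apply: leq_trans size_s; rewrite leq_mul2r ltnS leqnSn orbT.
have dvd_a : m.+1 %| size (take a s) by rewrite size_takel ?dvdn_mull //; move: size_j; rewrite mulSn; lia.
split.
  apply: contra rej_s => ones_j.
  rewrite -(cat_take_drop a s) -(cat_take_drop m.+1 (drop a s)).
  exact: counter_accepts_ones_block (size_block size_j) ones_j.
apply: (@eq_from_nth _ false); first by rewrite size_succ_bits !size_block.
move=> i; rewrite size_block // => lt_i; rewrite nth_succ_bits ?size_block //.
apply/eqP; apply: contraNT rej_s => carry_err.
have size_i : i < size (drop a s) by rewrite size_drop; move: size_s; rewrite /a !mulSn; lia.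
set D := drop i.+1 (drop a s).
have size_D : m < size D by rewrite !size_drop; move: size_s; rewrite /a !mulSn; lia.
rewrite -(cat_take_drop a s) -(cat_take_drop i (drop a s)) (drop_nth false size_i) -/D.
rewrite -(cat_take_drop m D) (drop_nth false size_D).
apply: counter_accepts_carry_error; first exact: dvd_a.
- by rewrite size_takel // ltnW.
- exact: size_takel (ltnW size_D).
move: carry_err; rewrite /block !(nth_take _ lt_i) (take_takel _ (ltnW lt_i)) /D !nth_drop.
by have -> : a + (i.+1 + m) = j.+1 * m.+1 + i by rewrite /a mulSn; lia.
Qed.

Lemma counter_accepts_long s : (2 ^ m.+1).+1 * m.+1 <= size s -> accepts counter_nfa s.
Proof.
move=> size_s; apply/contraT => rej_s.
have count_up j : j <= 2 ^ m.+1 -> j <= nat_of_bits (block s j).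
  elim: j => // j IH lt_j.
  have size_j : j.+2 * m.+1 <= size s by apply: leq_trans size_s; rewrite leq_mul2r ltnS lt_j orbT.
  have [not_ones ->] := rejected_block_succ rej_s size_j.
  by rewrite nat_of_succ_bits // ltnS IH // ltnW.
have := count_up _ (leqnn _); rewrite leqNgt.
by rewrite -{2}(size_block size_s) nat_of_bits_lt.
Qed.

Definition counter_block j := iter j succ_bits (nseq m.+1 false).

Definition counter_word : seq bool :=
  mkseq (fun t => nth false (counter_block (t %/ m.+1)) (t %% m.+1)) (2 ^ m * m.+1).

Lemma size_counter_block j : size (counter_block j) = m.+1.
Proof. by elim: j => [|j IH] /=; rewrite ?size_nseq // size_succ_bits. Qed.

Lemma nat_of_counter_block j : j < 2 ^ m.+1 -> nat_of_bits (counter_block j) = j.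
Proof.
elim: j => [|j IH] lt_j; first exact: nat_of_bits_zeros.
have IHj := IH (ltnW lt_j); rewrite /counter_block iterS nat_of_succ_bits ?IHj //.
apply: contraL lt_j => /nat_of_bits_ones; rewrite IHj size_counter_block => ->.
by rewrite ltnn.
Qed.

Lemma counter_block_not_ones j : j < 2 ^ m -> ~~ all id (counter_block j).
Proof.
move=> lt_j; have lt_j' : j < 2 ^ m.+1 by rewrite expnS; lia.
apply/negP => /nat_of_bits_ones; rewrite nat_of_counter_block // size_counter_block expnS.
lia.
Qed.

Lemma size_counter_word : size counter_word = 2 ^ m * m.+1.
Proof. exact: size_mkseq. Qed.

Lemma nth_counter_word t : t < 2 ^ m * m.+1 ->
  nth false counter_word t = nth false (counter_block (t %/ m.+1)) (t %% m.+1).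
Proof. exact: nth_mkseq. Qed.

Definition counter_word_invariant t (q : cstate) : Prop :=
  match q with
  | Some (inl (inl i)) => i = t %% m.+1 :> nat
  | Some (inl (inr (i, f))) =>
      i = t %% m.+1 :> nat /\ f = all id (take i (counter_block (t %/ m.+1)))
  | Some (inr (i, e)) => t + i < 2 ^ m * m.+1 -> e = nth false counter_word (t + i)
  | None => False
  end.

Lemma check_step_invariant t (i : 'I_m.+1) f q : t < 2 ^ m * m.+1 ->
  i = t %% m.+1 :> nat -> f = all id (take i (counter_block (t %/ m.+1))) ->
  q \in check_step i f (nth false counter_word t) -> counter_word_invariant t.+1 q.
Proof.
move=> lt_t i_t f_t; rewrite nth_counter_word // -i_t.
set c := counter_block (t %/ m.+1).
have t_E : t = t %/ m.+1 * m.+1 + i by rewrite i_t -divn_eq.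
have lt_tm : t %/ m.+1 < 2 ^ m by rewrite ltn_divLR.
have lt_i : i < size c by rewrite size_counter_block.
rewrite /check_step => /setU1P [-> /= | ].
  rewrite addSnnS => lt_t'; rewrite nth_counter_word //.
  have -> : (t + m.+1) %/ m.+1 = (t %/ m.+1).+1 by rewrite divnDr // divnn addn1.
  have -> : (t + m.+1) %% m.+1 = i by rewrite modnDr i_t.
  by rewrite /= nth_succ_bits // f_t.
have all_take_S : all id (take i.+1 c) = all id (take i c) && nth false c i.
  by rewrite (take_nth false lt_i) all_rcons andbC.
case: ifP => [lt_im | /negbT ge_im].
  rewrite inE => /eqP -> /=.
  have t1_E : t.+1 = t %/ m.+1 * m.+1 + i.+1 by rewrite {1}t_E addnS.
  rewrite inordK // t1_E modnMDl (@modn_small i.+1) // divnMDl // (@divn_small i.+1) // addn0.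
  by rewrite all_take_S f_t.
case: ifP => [/andP [f1 d1] | _]; last by rewrite inE.
have i_m : i = m :> nat by move: (ltn_ord i) ge_im; lia.
move/negP: (counter_block_not_ones lt_tm); case.
by rewrite -/c -(take_size c) size_counter_block -i_m all_take_S -f_t f1 d1.
Qed.

Lemma counter_step_invariant t q q' : t < 2 ^ m * m.+1 -> counter_word_invariant t q ->
  q' \in counter_step q (nth false counter_word t) -> counter_word_invariant t.+1 q'.
Proof.
move=> lt_t; case: q => [[[i | [i f]] | [i e]] |] //=.
- move=> i_t /setU1P [-> /= | ]; first by rewrite i_t -addn1 modnDml addn1.
  case: ifP => [/eqP i0 | _]; last by rewrite inE.
  by apply: check_step_invariant => //; rewrite i0 take0.
- by move=> [i_t f_t]; apply: check_step_invariant.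
- move=> e_t; case: ifP => [/eqP i0 | /negbT i_n0].
    by move: e_t; rewrite i0 addn0 => /(_ lt_t) ->; rewrite eqxx inE.
  have i_pos : 0 < i by rewrite lt0n; apply: contra i_n0 => /eqP i0; apply/eqP/val_inj.
  rewrite inE => /eqP -> /=; rewrite inordK; last by move: (ltn_ord i); lia.
  by rewrite addSnnS prednK.
Qed.

Lemma counter_rejects_word : ~~ accepts counter_nfa counter_word.
Proof.
have run_invariant t : t <= 2 ^ m * m.+1 ->
    forall q, q \in cdelta (Scan ord0) (take t counter_word) -> counter_word_invariant t q.
  elim: t => [|t IH] lt_t q; first by rewrite take0 inE => /eqP ->.
  rewrite (take_nth false) ?size_counter_word // delta_star_rcons => /bigcupP [r r_t q_r].
  by apply: counter_step_invariant q_r => //; apply: IH r_t; apply: ltnW.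
apply/existsP => -[q /andP [q_run]]; rewrite inE => /eqP q_err.
have := run_invariant _ (leqnn _) q; rewrite -size_counter_word take_size.
by move=> /(_ q_run); rewrite q_err.
Qed.
End CounterNFA.

Theorem theorem9 :
  exists c : nat, forall n : nat, 1 <= n ->
    exists L : seq bool -> Prop,
      in_DD0 L /\
      (exists M : nfa bool, recognizes M L /\ nfa_size M <= c * n ^ 2) /\
      (forall M : nfa bool, is_poNFA M -> recognizes M L ->
         2 ^ n.-1 < nfa_size M).
Proof.
(* The NFA below has 31 * (5 * n + 1) <= 186 * n ^ 2 states. *)
exists 186; case=> [//|m] _.
have B_live := @counter_nfa_live m.
exists (accepts (decoder_nfa (counter_nfa m))); split; [|split].
- right; apply: (@lang_finite_bounded _ _ (fun w => ~~ accepts (decoder_nfa (counter_nfa m)) w)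
    (6 * ((2 ^ m.+1).+1 * m.+1) + 6)) => [w | w]; first by split => /negP.
  by apply: decoder_rejected_short => // s; apply: counter_accepts_long.
- exists (decoder_nfa (counter_nfa m)); split => //.
  by rewrite /nfa_size decoder_nfa_card counter_nfa_card; nia.
- move=> M poM recM; have := poNFA_decoder_card_gt B_live (counter_rejects_word m) poM recM.
  by apply: leq_trans; rewrite size_counter_word ltnS leq_pmulr.
Qed.
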